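(* Let $S$ be a regular semigroup and let $\phi:\mathcal G\to S^1$ be a skeleton mapping on $X$. Then for every $g\in\mathcal G_i$ with $i\ge2$, the elements $g^{\phi,l}$ and $g^{\phi,r}$ are idempotents of $S$.
   Context: Let $X$ be a nonempty set and $X'=\{x':x\in X\}$ a disjoint copy of $X$; let $1$ be a new symbol and $A=X\cup X'\cup\{1\}$ (the anchors), with the involution $1'=1$, $(x)'=x'$, $(x')'=x$ for $x\in X$. For a 5-tuple $g$ write $g=(g^l,g^{la},g^c,g^{ra},g^r)$ (left entry, left anchor, middle entry, right anchor, right entry); the notation iterates, e.g. for $s\in\{l,r\}$, $g^{ls}$ is the $s$-entry of $g^l$ and $g^{lsa}$ is the $s$-anchor of $g^l$. Define $\mathcal G_0=\{1\}$; $\mathcal G_{1,e}=\{g_{xx'}:x\in X\}$ where $g_{xx'}=(1,1,xx',x',1)$ (the middle entry is a formal symbol), and $\mathcal G_{1,d}=\emptyset$. For $i\ge 2$: $\mathcal G_{i,e}=\{(g,(g^{la})',g^l,(g^{ra})',g),\ (g,(g^{ra})',g^l,(g^{la})',g) : g\in\mathcal G_{i-1,e}\}$, and $\mathcal G_{i,d}$ is the set of all $g\in\mathcal G_{i-1}\times A\times\mathcal G_{i-2}\times A\times\mathcal G_{i-1}$ such that $g^l\neq g^r$, $(g^c,g^{la})=(g^{ls},(g^{lsa})')$ for some $s\in\{l,r\}$, and $(g^c,g^{ra})=(g^{rt},(g^{rta})')$ for some $t\in\{l,r\}$; here $\mathcal G_i=\mathcal G_{i,d}\cup\mathcal G_{i,e}$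 for $i\ge1$. Put $\mathcal G^5=\bigcup_{i\ge1}\mathcal G_i$, $\mathcal G=\mathcal G^5\cup A$ (the symbol $1$ is used both as an anchor and as an element of $\mathcal G_0$). $S^1$ denotes $S$ with an identity adjoined if necessary. For a mapping $\phi:\mathcal G\to S^1$ and $g\in\mathcal G^5$ of height $\ge2$ put $g^{\phi,l}=(g^c\phi)((g^{la})'\phi)(g^l\phi)(g^{la}\phi)$ and $g^{\phi,r}=((g^{ra})'\phi)(g^r\phi)(g^{ra}\phi)(g^c\phi)$. For elements $a,b$ of a regular semigroup $T$, the sandwich set is $S(a,b)=\{h\in E(T): (bb')h=h=h(a'a),\ (a'a)h(bb')=(a'a)(bb')\}$ for any inverses $a'$ of $a$, $b'$ of $b$ (independent of the choice). A skeleton mapping (on $X$) is a mapping $\phi:\mathcal G\to S^1$, $S$ a regular semigroup, such that: (i) for every $x\in X$, $x\phi\in S$, $x'\phi$ is an inverse of $x\phi$ (i.e. $(x\phi)(x'\phi)(x\phi)=x\phi$ and $(x'\phi)(x\phi)(x'\phi)=x'\phi$), and $g_{xx'}\phi=(x\phi)(x'\phi)$; (ii) $(1\phi)(a\phi)=a\phi=(a\phi)(1\phi)$ for all $a\in A$; (iii) $g\phi\in S(g^{\phi,r},g^{\phi,l})$ for every $g\in\mathcal G_i$ with $i\ge2$. *)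

Set Implicit Arguments.

Inductive anchor (X : Type) : Type :=
| aone : anchor X
| ax   : X -> anchor X
| ax'  : X -> anchor X.
Arguments aone {X}.

Definition ainv {X : Type} (a : anchor X) : anchor X :=
  match a with
  | aone => aone
  | ax x => ax' x
  | ax' x => ax x
  end.

Inductive gterm (X : Type) : Type :=
| GA   : anchor X -> gterm X                     (* an anchor (1 also = element of G_0) *)
| Gsym : X -> gterm X                            (* the formal middle symbol xx' *)
| G5   : gterm X -> anchor X -> gterm X -> anchor X -> gterm X -> gterm X.
           (* (g^l, g^la, g^c, g^ra, g^r) *)

Inductive side := sL | sR.

(* projections (defaults on non-5-tuples are never used on elements of G_i, i>=1) *)
Definition gl {X} (g : gterm X) : gterm X :=
  match g with G5 l _ _ _ _ => l | _ => GA aone end.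
Definition gla {X} (g : gterm X) : anchor X :=
  match g with G5 _ la _ _ _ => la | _ => aone end.
Definition gc {X} (g : gterm X) : gterm X :=
  match g with G5 _ _ c _ _ => c | _ => GA aone end.
Definition gra {X} (g : gterm X) : anchor X :=
  match g with G5 _ _ _ ra _ => ra | _ => aone end.
Definition gr {X} (g : gterm X) : gterm X :=
  match g with G5 _ _ _ _ r => r | _ => GA aone end.

Definition gent {X} (s : side) (g : gterm X) : gterm X :=
  match s with sL => gl g | sR => gr g end.
Definition ganc {X} (s : side) (g : gterm X) : anchor X :=
  match s with sL => gla g | sR => gra g end.

Definition gxx {X} (x : X) : gterm X := G5 (GA aone) aone (Gsym x) (ax' x) (GA aone).

(* G_{i,e} (only meaningful for i >= 1) *)
Fixpoint Ge {X} (i : nat) (g : gterm X) : Prop :=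
  match i with
  | 0 => False
  | S j =>
      match j with
      | 0 => exists x : X, g = gxx x
      | S _ => exists h, Ge j h /\
                 (g = G5 h (ainv (gla h)) (gl h) (ainv (gra h)) h \/
                  g = G5 h (ainv (gra h)) (gl h) (ainv (gla h)) h)
      end
  end.

(* the defining condition of G_{i,d}, given G_{i-1} (= P) and G_{i-2} (= Q) *)
Definition Gd_cond {X} (P Q : gterm X -> Prop) (g : gterm X) : Prop :=
  exists l la c ra r, g = G5 l la c ra r /\ P l /\ Q c /\ P r /\
    l <> r /\
    (exists s, c = gent s l /\ la = ainv (ganc s l)) /\
    (exists t, c = gent t r /\ ra = ainv (ganc t r)).

Fixpoint Gs {X} (i : nat) : gterm X -> Prop :=
  match i with
  | 0 => fun g => g = GA aone
  | S j =>
      match j with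
      | 0 => fun g => Ge 1 g
      | S k => fun g => Ge (S j) g \/ Gd_cond (Gs j) (Gs k) g
      end
  end.

(* ---------- S^1 with S a regular semigroup ----------
   M plays the role of S^1, a monoid (mul, one); inS carves out S,
   which is closed under mul, regular, and M \ S ⊆ {one}. *)
Definition is_S1_of_regular (M : Type) (mul : M -> M -> M) (one : M)
  (inS : M -> Prop) : Prop :=
  (forall a b c, mul (mul a b) c = mul a (mul b c)) /\
  (forall a, mul one a = a /\ mul a one = a) /\
  (forall a b, inS a -> inS b -> inS (mul a b)) /\
  (forall a, inS a \/ a = one) /\
  (forall a, inS a -> exists b, inS b /\ mul (mul a b) a = a /\ mul (mul b a) b = b).

Definition is_inverse {M} (mul : M -> M -> M) (a a' : M) : Prop :=
  mul (mul a a') a = a /\ mul (mul a' a) a' = a'.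

Definition idempotent {M} (mul : M -> M -> M) (e : M) : Prop := mul e e = e.

(* sandwich set S(a,b), taken in the regular semigroup T = S^1 *)
Definition sandwich {M} (mul : M -> M -> M) (a b h : M) : Prop :=
  idempotent mul h /\
  exists a' b', is_inverse mul a a' /\ is_inverse mul b b' /\
    mul (mul b b') h = h /\ h = mul h (mul a' a) /\
    mul (mul (mul a' a) h) (mul b b') = mul (mul a' a) (mul b b').

Definition gphil {X M} (mul : M -> M -> M) (phi : gterm X -> M) (g : gterm X) : M :=
  mul (mul (mul (phi (gc g)) (phi (GA (ainv (gla g))))) (phi (gl g))) (phi (GA (gla g))).
Definition gphir {X M} (mul : M -> M -> M) (phi : gterm X -> M) (g : gterm X) : M :=
  mul (mul (mul (phi (GA (ainv (gra g)))) (phi (gr g))) (phi (GA (gra g)))) (phi (gc g)).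

(* skeleton mapping (phi is total on gterm; only its values on 𝒢 matter) *)
Definition skeleton {X M} (mul : M -> M -> M) (inS : M -> Prop)
  (phi : gterm X -> M) : Prop :=
  (forall x : X, inS (phi (GA (ax x))) /\
     is_inverse mul (phi (GA (ax x))) (phi (GA (ax' x))) /\
     phi (gxx x) = mul (phi (GA (ax x))) (phi (GA (ax' x)))) /\
  (forall a : anchor X, mul (phi (GA aone)) (phi (GA a)) = phi (GA a) /\
                        mul (phi (GA a)) (phi (GA aone)) = phi (GA a)) /\
  (forall (i : nat) (g : gterm X), 2 <= i -> Gs i g ->
     sandwich mul (gphir mul phi g) (gphil mul phi g) (phi g)).

From Stdlib Require Import Lia.

Set Implicit Arguments.
Unset Strict Implicit.

(* Write e = phi(m) and, for a side s of a 5-tuple m with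
   s-anchor a and s-entry m^s, let U_s(m) = phi(a') phi(m^s) phi(a).  Call m
   "side-regular" when e lies in S and e U_s(m) e = e for both sides s.
   (1) If l is side-regular and g has left entry l, left anchor a' and middle
       entry l^s with a = l^{sa}, then g^{phi,l} = (phi(l^s) phi(a)) e phi(a')
       is idempotent because e U_s(l) e = e; symmetrically for g^{phi,r}.
   (2) Conversely, if g^{phi,l}, g^{phi,r} are idempotent and phi(g) lies in
       the sandwich set S(g^{phi,r}, g^{phi,l}), then g^{phi,l} phi(g) = phi(g)
       = phi(g) g^{phi,r}; as g^{phi,l} = phi(g^c) U_l(g) and
       g^{phi,r} = U_r(g) phi(g^c) with phi(g^c) idempotent, g is side-regular.
   Every element of G_1 is side-regular by a direct computation, and every
   element of G_{i+2} is built from entries in G_{i+1} and G_i, so (1) and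
   (2) give side-regularity of all of G_{i+1} by induction on i; one more use
   of (1) proves the theorem. *)

Section SemigroupIdentities.
Variables (M : Type) (mul : M -> M -> M).
Hypothesis mulA : forall a b c, mul (mul a b) c = mul a (mul b c).
Local Infix "⋅" := mul (at level 40, left associativity).

Lemma idempotent_of_sandwiched (e x y : M) :
  e ⋅ (y ⋅ x) ⋅ e = e -> idempotent mul (x ⋅ e ⋅ y).
Proof.
  intros Hfix. unfold idempotent.
  transitivity (x ⋅ (e ⋅ (y ⋅ x) ⋅ e) ⋅ y).
  - rewrite !mulA. reflexivity.
  - rewrite Hfix. reflexivity.
Qed.

(* An idempotent b fixes every h with (b b') h = h, and dually; this turns
   the sandwich-set conditions into absorption laws. *)
Lemma idempotent_absorbs_left (b b' h : M) :
  b ⋅ b = b -> b ⋅ b' ⋅ h = h -> b ⋅ h = h.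
Proof.
  intros Hb Hh. rewrite <- Hh, <- !mulA, Hb. reflexivity.
Qed.

Lemma idempotent_absorbs_right (a a' h : M) :
  a ⋅ a = a -> h = h ⋅ (a' ⋅ a) -> h ⋅ a = h.
Proof.
  intros Ha Hh. rewrite Hh, !mulA, Ha. reflexivity.
Qed.

Lemma sides_of_factored_absorption (c u v e : M) :
  c ⋅ c = c -> c ⋅ u ⋅ e = e -> e ⋅ v ⋅ c = e -> e ⋅ e = e ->
  e ⋅ u ⋅ e = e /\ e ⋅ v ⋅ e = e.
Proof.
  intros Hc Hl Hr He.
  assert (Hevcue : e ⋅ v ⋅ c ⋅ u ⋅ e = e).
  { transitivity ((e ⋅ v ⋅ c) ⋅ (c ⋅ u ⋅ e)).
    - rewrite !mulA, <- (mulA c c), Hc. reflexivity.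
    - rewrite Hl, Hr. exact He. }
  split.
  - transitivity ((e ⋅ v ⋅ c) ⋅ u ⋅ e).
    + rewrite Hr. reflexivity.
    + exact Hevcue.
  - transitivity (e ⋅ v ⋅ (c ⋅ u ⋅ e)).
    + rewrite Hl. reflexivity.
    + rewrite <- !mulA. exact Hevcue.
Qed.

(* For mutually inverse p, q and a right identity o of both, the idempotent
   p q is fixed by both of its sandwiches; this is the base case G_1. *)
Lemma inverse_pair_sides (p q o : M) :
  is_inverse mul p q -> q ⋅ o = q -> p ⋅ o = p ->
  p ⋅ q ⋅ (o ⋅ o ⋅ o) ⋅ (p ⋅ q) = p ⋅ q /\ p ⋅ q ⋅ (p ⋅ o ⋅ q) ⋅ (p ⋅ q) = p ⋅ q.
Proof.
  intros [Hpqp _] Hqo Hpo.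
  assert (Hpqo : p ⋅ q ⋅ o = p ⋅ q) by (rewrite mulA, Hqo; reflexivity).
  split; rewrite <- !mulA.
  - rewrite !Hpqo, Hpqp. reflexivity.
  - rewrite Hpqp, Hpo, Hpqp. reflexivity.
Qed.
End SemigroupIdentities.

Section S1Ideal.
Variables (M : Type) (mul : M -> M -> M) (one : M) (inS : M -> Prop).
Hypothesis HS : is_S1_of_regular mul one inS.

Lemma inS_mul_l (a b : M) : inS a -> inS (mul a b).
Proof.
  destruct HS as [_ [Hone [Hclosed [HS1 _]]]]. intros Ha.
  destruct (HS1 b) as [Hb | ->].
  - exact (Hclosed a b Ha Hb).
  - rewrite (proj2 (Hone a)). exact Ha.
Qed.

Lemma inS_mul_r (a b : M) : inS b -> inS (mul a b).
Proof.
  destruct HS as [_ [Hone [Hclosed [HS1 _]]]]. intros Hb.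
  destruct (HS1 a) as [Ha | ->].
  - exact (Hclosed a b Ha Hb).
  - rewrite (proj1 (Hone b)). exact Hb.
Qed.
End S1Ideal.

Lemma ainv_involutive {X : Type} (a : anchor X) : ainv (ainv a) = a.
Proof. destruct a; reflexivity. Qed.

Lemma Ge_entries_equal {X : Type} (i : nat) (h : gterm X) : Ge i h -> gl h = gr h.
Proof.
  destruct i as [|[|j]]; simpl.
  - tauto.
  - intros [x ->]. reflexivity.
  - intros [h' [_ [-> | ->]]]; reflexivity.
Qed.

Lemma Ge_Gs {X : Type} (i : nat) (h : gterm X) : Ge i h -> Gs i h.
Proof.
  destruct i as [|[|j]]; simpl; tauto.
Qed.

Lemma Ge_left_entry {X : Type} (i : nat) (h : gterm X) : Ge (S i) h -> Gs i (gl h).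
Proof.
  destruct i as [|[|i]]; simpl.
  - intros [x ->]. reflexivity.
  - intros [h' [Hh' [-> | ->]]]; exact Hh'.
  - intros [h' [Hh' [-> | ->]]]; left; exact Hh'.
Qed.

(* Shape of G_{i+2}: every element is (l, (l^{sa})', l^s, (r^{ta})', r) for
   some l, r in G_{i+1} and sides s, t with l^s = r^t in G_i.  For the
   elements of G_{i+2,e} this holds because h^l = h^r. *)
Lemma Gs_shape {X : Type} (i : nat) (g : gterm X) : Gs (S (S i)) g ->
  exists l r s t, Gs (S i) l /\ Gs (S i) r /\ Gs i (gent s l) /\
    gent s l = gent t r /\
    g = G5 l (ainv (ganc s l)) (gent s l) (ainv (ganc t r)) r.
Proof.
  intros [[h [Hh [-> | ->]]] | Hd].
  - exists h, h, sL, sR.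
    repeat split.
    + exact (Ge_Gs Hh).
    + exact (Ge_Gs Hh).
    + exact (Ge_left_entry Hh).
    + exact (Ge_entries_equal Hh).
  - exists h, h, sR, sL. simpl. rewrite <- (Ge_entries_equal Hh).
    repeat split.
    + exact (Ge_Gs Hh).
    + exact (Ge_Gs Hh).
    + exact (Ge_left_entry Hh).
  - destruct Hd as [l [la [c [ra [r [-> [Hl [Hc [Hr
                     [_ [[s [-> ->]] [t [Hlr ->]]]]]]]]]]]]].
    exists l, r, s, t. repeat split; auto.
Qed.

Section SkeletonMapping.
Variables (X M : Type) (mul : M -> M -> M) (one : M) (inS : M -> Prop).
Hypothesis HS : is_S1_of_regular mul one inS.
Variable phi : gterm X -> M.
Hypothesis Hphi : skeleton mul inS phi.
Local Infix "⋅" := mul (at level 40, left associativity).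

Let mulA : forall a b c, a ⋅ b ⋅ c = a ⋅ (b ⋅ c) := proj1 HS.

Definition side_conj (s : side) (m : gterm X) : M :=
  phi (GA (ainv (ganc s m))) ⋅ phi (gent s m) ⋅ phi (GA (ganc s m)).

Definition side_regular (m : gterm X) : Prop :=
  inS (phi m) /\ forall s : side, phi m ⋅ side_conj s m ⋅ phi m = phi m.

Lemma gphil_factor (g : gterm X) : gphil mul phi g = phi (gc g) ⋅ side_conj sL g.
Proof. unfold gphil, side_conj. simpl. rewrite !mulA. reflexivity. Qed.

Lemma gphir_factor (g : gterm X) : gphir mul phi g = side_conj sR g ⋅ phi (gc g).
Proof. reflexivity. Qed.

(* phi maps every element of G_i (i >= 0) to an idempotent: 1 by (ii),
   g_{xx'} because x'phi is an inverse of x phi, the rest by (iii). *)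
Lemma phi_idempotent (i : nat) (m : gterm X) : Gs i m -> idempotent mul (phi m).
Proof.
  destruct Hphi as [Hx [Hone Hsandwich]].
  destruct i as [|[|i]]; simpl.
  - intros ->. exact (proj1 (Hone aone)).
  - intros [x ->]. destruct (Hx x) as [_ [[Hxx'x _] Hgxx]].
    unfold idempotent. rewrite Hgxx, <- mulA, Hxx'x. reflexivity.
  - intros Hm. apply (Hsandwich (S (S i))); [lia | exact Hm].
Qed.

Lemma side_regular_G1 (m : gterm X) : Gs 1 m -> side_regular m.
Proof.
  intros [x ->]. destruct Hphi as [Hx [Hone _]].
  destruct (Hx x) as [HxS [Hinv Hgxx]].
  destruct (inverse_pair_sides mulA Hinv (proj2 (Hone (ax' x)))
              (proj2 (Hone (ax x)))) as [HsL HsR].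
  unfold side_regular, side_conj. simpl. rewrite Hgxx.
  split.
  - exact (inS_mul_l HS _ HxS).
  - intros []; assumption.
Qed.

Lemma gphi_idempotent_of_regular_entries (i : nat) (g : gterm X) :
  (forall m, Gs (S i) m -> side_regular m) -> Gs (S (S i)) g ->
  (inS (gphil mul phi g) /\ idempotent mul (gphil mul phi g)) /\
  (inS (gphir mul phi g) /\ idempotent mul (gphir mul phi g)).
Proof.
  intros Hregular Hg.
  destruct (Gs_shape Hg) as [l [r [s [t [Hl [Hr [_ [Hlr ->]]]]]]]].
  destruct (Hregular l Hl) as [HlS Hlfix]. destruct (Hregular r Hr) as [HrS Hrfix].
  specialize (Hlfix s). specialize (Hrfix t).
  unfold side_conj in Hlfix, Hrfix.
  rewrite (mulA (phi (GA (ainv (ganc s l))))) in Hlfix.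
  unfold gphil, gphir. simpl. rewrite !ainv_involutive, Hlr.
  rewrite (mulA (phi (GA (ganc t r)) ⋅ phi r)).
  split; split.
  - apply (inS_mul_l HS), (inS_mul_r HS), HlS.
  - apply (idempotent_of_sandwiched mulA). rewrite <- Hlr. exact Hlfix.
  - apply (inS_mul_l HS), (inS_mul_r HS), HrS.
  - apply (idempotent_of_sandwiched mulA). exact Hrfix.
Qed.

Lemma side_regular_of_sandwich (i : nat) (g : gterm X) : Gs (S (S i)) g ->
  inS (gphil mul phi g) -> idempotent mul (gphil mul phi g) ->
  idempotent mul (gphir mul phi g) -> side_regular g.
Proof.
  intros Hg HlS Hlidem Hridem.
  destruct Hphi as [_ [_ Hsandwich]].
  destruct (Hsandwich (S (S i)) g ltac:(lia) Hg)
    as [Hgidem [r' [l' [_ [_ [Hleft [Hright _]]]]]]].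
  pose proof (idempotent_absorbs_left mulA Hlidem Hleft) as Hlg.
  pose proof (idempotent_absorbs_right mulA Hridem Hright) as Hgr.
  assert (Hcidem : idempotent mul (phi (gc g))).
  { destruct (Gs_shape Hg) as [l [r [s [t [_ [_ [Hc [_ ->]]]]]]]].
    exact (phi_idempotent Hc). }
  rewrite gphil_factor in Hlg. rewrite gphir_factor, <- mulA in Hgr.
  destruct (sides_of_factored_absorption mulA Hcidem Hlg Hgr Hgidem) as [HsL HsR].
  split.
  - rewrite <- Hlg. apply (inS_mul_l HS). rewrite <- gphil_factor. exact HlS.
  - intros []; assumption.
Qed.

Lemma side_regular_Gs (i : nat) (m : gterm X) : Gs (S i) m -> side_regular m.
Proof.
  revert m. induction i as [|i IH]; intros m Hm.
  - exact (side_regular_G1 Hm).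
  - destruct (gphi_idempotent_of_regular_entries IH Hm) as [[HlS Hlidem] [_ Hridem]].
    exact (side_regular_of_sandwich Hm HlS Hlidem Hridem).
Qed.
End SkeletonMapping.

Theorem lemma6p1 (X : Type) (HX : inhabited X)
  (M : Type) (mul : M -> M -> M) (one : M) (inS : M -> Prop)
  (HS : is_S1_of_regular mul one inS)
  (phi : gterm X -> M) (Hphi : skeleton mul inS phi) :
  forall (i : nat) (g : gterm X), 2 <= i -> Gs i g ->
    (inS (gphil mul phi g) /\ idempotent mul (gphil mul phi g)) /\
    (inS (gphir mul phi g) /\ idempotent mul (gphir mul phi g)).
Proof.
  intros i g Hi Hg.
  destruct i as [|[|i]]; [lia | lia |].
  exact (gphi_idempotent_of_regular_entries HS (fun m Hm => side_regular_Gs HS Hphi Hm) Hg).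
Qed.
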